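(* A complete theory $T$ has a non-aritizable expansion if and only if $T$ has an infinite model.
   Context: An expansion of $T$ is a complete theory $T'\supseteq T$ in a language containing that of $T$. For $n\geq1$ a theory $T'$ is $n$-ary if every $T'$-formula is $T'$-equivalent to a Boolean combination of $T'$-formulas with at most $n$ free variables (for $n=1$: formulas with one free variable and formulas $x\approx y$). A theory is $n$-aritizable if it has an $n$-ary expansion, and aritizable if it is $n$-aritizable for some $n$; non-aritizable means not aritizable. *)

From mathcomp Require Import all_boot.
Set Implicit Arguments. Unset Strict Implicit. Unset Printing Implicit Defensive.

(* A first-order (one-sorted) language: function symbols (constants = arity 0)
   and relation symbols, each with an arity. Equality is built in. *)
Record language := Language {
  func : Type; rel : Type;
  farity : func -> nat; rarity : rel -> nat }.

(* Terms, with variables x_0, x_1, ... indexed by nat (de Bruijn). *)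
Inductive term (L : language) : Type :=
| var : nat -> term L
| app : forall f : func L, ('I_(farity f) -> term L) -> term L.

Inductive form (L : language) : Type :=
| feq : term L -> term L -> form L
| frel : forall r : rel L, ('I_(rarity r) -> term L) -> form L
| ffalse : form L
| fimp : form L -> form L -> form L
| fand : form L -> form L -> form L
| f_or : form L -> form L -> form L
| fall : form L -> form L      (* binds variable 0 *)
| fex : form L -> form L.      (* binds variable 0 *)

Arguments var {L}. Arguments ffalse {L}.

Definition fnot L (p : form L) := fimp p ffalse.
Definition fiff L (p q : form L) := fand (fimp p q) (fimp q p).

Fixpoint tfree L (i : nat) (t : term L) : Prop :=
  match t with
  | var j => i = j
  | app f args => exists k, tfree i (args k)
  end.

Fixpoint ffree L (i : nat) (p : form L) : Prop :=
  match p with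
  | feq t1 t2 => tfree i t1 \/ tfree i t2
  | frel r args => exists k, tfree i (args k)
  | ffalse => False
  | fimp p q | fand p q | f_or p q => ffree i p \/ ffree i q
  | fall p | fex p => ffree i.+1 p
  end.

Definition sentence L (p : form L) := forall i, ~ ffree i p.

Record structure (L : language) := Structure {
  dom :> Type;
  dom_inh : inhabited dom;
  fint : forall f : func L, ('I_(farity f) -> dom) -> dom;
  rint : forall r : rel L, ('I_(rarity r) -> dom) -> Prop }.

Definition scons (M : Type) (x : M) (e : nat -> M) : nat -> M :=
  fun i => match i with 0 => x | i'.+1 => e i' end.

Fixpoint teval L (M : structure L) (e : nat -> M) (t : term L) : M :=
  match t with
  | var i => e i
  | app f args => @fint L M f (fun k => teval e (args k))
  end.

Fixpoint sat L (M : structure L) (e : nat -> M) (p : form L) : Prop :=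
  match p with
  | feq t1 t2 => teval e t1 = teval e t2
  | frel r args => @rint L M r (fun k => teval e (args k))
  | ffalse => False
  | fimp p q => sat e p -> sat e q
  | fand p q => sat e p /\ sat e q
  | f_or p q => sat e p \/ sat e q
  | fall p => forall x : M, sat (scons x e) p
  | fex p => exists x : M, sat (scons x e) p
  end.

Definition theory (L : language) := form L -> Prop.

Definition models L (M : structure L) (T : theory L) :=
  forall p, T p -> forall e : nat -> M, sat e p.

(* T |= p (p holds under every assignment in every model of T, i.e. T |= the
   universal closure of p). *)
Definition consequence L (T : theory L) (p : form L) :=
  forall M : structure L, models M T -> forall e : nat -> M, sat e p.

Definition complete L (T : theory L) :=
  [/\ forall p, T p -> sentence p,
      exists M : structure L, models M T &
      forall p, sentence p -> consequence T p \/ consequence T (fnot p)].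

Definition Lsum (L E : language) : language :=
  {| func := (func L + func E)%type; rel := (rel L + rel E)%type;
     farity := fun s => match s with inl f => farity f | inr g => farity g end;
     rarity := fun s => match s with inl r => rarity r | inr r => rarity r end |}.

Fixpoint ttr L E (t : term L) : term (Lsum L E) :=
  match t with
  | var i => var i
  | app f args => @app (Lsum L E) (inl f) (fun k => ttr E (args k))
  end.

Fixpoint ftr L E (p : form L) : form (Lsum L E) :=
  match p with
  | feq t1 t2 => feq (ttr E t1) (ttr E t2)
  | frel r args => @frel (Lsum L E) (inl r) (fun k => ttr E (args k))
  | ffalse => ffalse
  | fimp p q => fimp (ftr E p) (ftr E q)
  | fand p q => fand (ftr E p) (ftr E q)
  | f_or p q => f_or (ftr E p) (ftr E q)
  | fall p => fall (ftr E p)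
  | fex p => fex (ftr E p)
  end.

Definition expansion L E (T : theory L) (T' : theory (Lsum L E)) :=
  complete T' /\ forall p, T p -> consequence T' (ftr E p).

Definition atmost_free L (n : nat) (p : form L) :=
  exists s : seq nat, size s <= n /\ forall i, ffree i p -> i \in s.

Definition nbasic L (n : nat) (p : form L) :=
  atmost_free n p \/ exists i j, p = feq (var i) (var j).

Inductive boolcomb L (P : form L -> Prop) : form L -> Prop :=
| bc_base p : P p -> boolcomb P p
| bc_false : boolcomb P ffalse
| bc_imp p q : boolcomb P p -> boolcomb P q -> boolcomb P (fimp p q)
| bc_and p q : boolcomb P p -> boolcomb P q -> boolcomb P (fand p q)
| bc_or p q : boolcomb P p -> boolcomb P q -> boolcomb P (f_or p q).

Definition nary L (n : nat) (T : theory L) :=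
  forall p : form L, exists q : form L,
    [/\ boolcomb (nbasic n) q,
        forall i, ffree i q -> ffree i p &
        consequence T (fiff p q)].

Definition aritizable L (T : theory L) :=
  exists n, 0 < n /\
    exists (E : language) (T' : theory (Lsum L E)), expansion T T' /\ nary n T'.

Definition infinite_type (M : Type) := forall s : seq M, exists x : M, forall k, k < size s -> nth x s k <> x.

From mathcomp Require Import all_boot zify boolp.

Set Implicit Arguments. Unset Strict Implicit. Unset Printing Implicit Defensive.

(* If every model of the complete theory T is finite, completeness bounds the size of all
   models of T, and hence of any expansion, by a single n.  When all models have at most n
   elements, a formula with more than n free variables is equivalent to the disjunction, over
   pairs i <> j of them, of x_i = x_j and the formula with x_j renamed to x_i, which has fewer
   free variables.  So the theory of any model of an expansion is n-ary, and every expansion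
   is aritizable.

   Conversely, embed the naturals into an infinite model and expand it by Q (the even points),
   P (the odd points) and, for each n, an (n+1)-ary R_n such that an odd point y codes a finite
   set of n-tuples of even points, R_n (z, y) holding when z is in that set, and such that any
   coded set can be toggled at any single tuple.  In an n-ary expansion R_n would be a Boolean
   combination of m atoms, each of which omits one of the first n variables, omits the last one,
   or is an equation made false by P and Q being disjoint.  On a grid of k = m + 1 points of Q,
   toggling realises all 2^(k^n) traces of R_n (-, y) with P y, whereas the atoms determine such
   a trace from m k^(n-1) bits. *)

(** * Free variables, renaming and quantifier blocks *)

Section Syntax.
Variable L : language.
Implicit Types (M : structure L) (t : term L) (p q : form L).

Fixpoint tfv t : seq nat :=
  match t with
  | var i => [:: i]
  | app f args => flatten [seq tfv (args k) | k <- enum 'I_(farity f)]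
  end.

Definition argsfv n (args : 'I_n -> term L) := flatten [seq tfv (args k) | k <- enum 'I_n].

Fixpoint fv p : seq nat :=
  match p with
  | feq t1 t2 => tfv t1 ++ tfv t2
  | frel r args => argsfv args
  | ffalse => [::]
  | fimp p q | fand p q | f_or p q => fv p ++ fv q
  | fall p | fex p => [seq i.-1 | i <- fv p & i != 0]
  end.

Lemma mem_argsfv n (args : 'I_n -> term L) i :
  (exists k, i \in tfv (args k)) <-> i \in argsfv args.
Proof.
split=> [[k ik]|/flattenP[_ /mapP[k _ ->] ik]]; last by exists k.
by apply/flattenP; exists (tfv (args k)); rewrite ?map_f ?mem_enum.
Qed.

Lemma tfreeE i t : tfree i t <-> i \in tfv t.
Proof.
elim: t => [j|f args IH] /=; first by rewrite inE; split=> [->|/eqP].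
rewrite -[flatten _]/(argsfv args) -mem_argsfv.
by split=> -[k /IH]; exists k.
Qed.

Lemma ffreeE i p : ffree i p <-> i \in fv p.
Proof.
elim: p i => [t1 t2|r args||p IHp q IHq|p IHp q IHq|p IHp q IHq|p IHp|p IHp] i /=.
- by rewrite mem_cat !tfreeE; split=> /orP.
- by rewrite -mem_argsfv; split=> -[k /tfreeE]; exists k.
- by [].
1-3: by rewrite mem_cat IHp IHq; split=> /orP.
1-2: rewrite IHp; split=> [iS|/mapP[j]]; last first.
1,3: by rewrite mem_filter => /andP[j0 jp ->]; rewrite prednK ?lt0n.
all: by apply/mapP; exists i.+1; rewrite ?mem_filter.
Qed.

Lemma teval_ext M (e e' : nat -> M) t :
  (forall i, tfree i t -> e i = e' i) -> teval e t = teval e' t.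
Proof.
elim: t => [i|f args IH] /= ee'; first exact: ee'.
by congr fint; apply: funext => k; apply: IH => i ik; apply: ee'; exists k.
Qed.

Lemma sat_ext M p (e e' : nat -> M) :
  (forall i, ffree i p -> e i = e' i) -> (sat e p <-> sat e' p).
Proof.
elim: p e e' => [t1 t2|r args||p IHp q IHq|p IHp q IHq|p IHp q IHq|p IHp|p IHp] e e' /= ee'.
- by rewrite (@teval_ext _ e e' t1) ?(@teval_ext _ e e' t2) // => i ?; apply: ee'; tauto.
- suff -> : (fun k => teval e (args k)) = (fun k => teval e' (args k)) by [].
  by apply: funext => k; apply: teval_ext => i ik; apply: ee'; exists k.
- by [].
1-3: by rewrite (IHp e e') ?(IHq e e') // => i ? ; apply: ee'; tauto.
1-2: have scons_ee' x : forall i, ffree i p -> scons x e i = scons x e' i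
       by case=> //= i /ee'.
- by split=> px x; apply/(IHp _ _ (scons_ee' x)).
- by split=> -[x px]; exists x; apply/(IHp _ _ (scons_ee' x)).
Qed.

Lemma sat_fiff M (e : nat -> M) p q : sat e (fiff p q) <-> (sat e p <-> sat e q).
Proof. by []. Qed.

Lemma sat_fnot M (e : nat -> M) p : sat e (fnot p) <-> ~ sat e p.
Proof. by []. Qed.

Lemma sentence_sat M p (e e' : nat -> M) : sentence p -> (sat e p <-> sat e' p).
Proof. by move=> sp; apply: sat_ext => i /sp. Qed.

Definition upren (s : nat -> nat) i := if i is i'.+1 then (s i').+1 else 0.

Fixpoint trename s t : term L :=
  match t with
  | var i => var (s i)
  | app f args => app (fun k => trename s (args k))
  end.

Fixpoint frename s p : form L :=
  match p with
  | feq t1 t2 => feq (trename s t1) (trename s t2)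
  | frel r args => frel (fun k => trename s (args k))
  | ffalse => ffalse
  | fimp p q => fimp (frename s p) (frename s q)
  | fand p q => fand (frename s p) (frename s q)
  | f_or p q => f_or (frename s p) (frename s q)
  | fall p => fall (frename (upren s) p)
  | fex p => fex (frename (upren s) p)
  end.

Lemma teval_rename M (e : nat -> M) s t : teval e (trename s t) = teval (e \o s) t.
Proof. by elim: t => //= f args IH; congr fint; apply: funext => k. Qed.

Lemma sat_rename M (e : nat -> M) s p : sat e (frename s p) <-> sat (e \o s) p.
Proof.
have scons_upren x e' s' : scons x e' \o upren s' = scons x (e' \o s') by apply: funext; case.
elim: p e s => [t1 t2|r args||p IHp q IHq|p IHp q IHq|p IHp q IHq|p IHp|p IHp] e s /=.
- by rewrite !teval_rename.
- suff -> : (fun k => teval e (trename s (args k))) = (fun k => teval (e \o s) (args k)) by [].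
  by apply: funext => k; rewrite teval_rename.
- by [].
1-3: by rewrite IHp IHq.
- by split=> px x; move: (px x); rewrite IHp scons_upren.
- by split=> -[x px]; exists x; move: px; rewrite IHp scons_upren.
Qed.

Lemma tfree_rename s t k : tfree k (trename s t) -> exists2 i, tfree i t & s i = k.
Proof.
elim: t => [i ->|f args IH [o /IH[i ti <-]]]; first by exists i.
by exists i => //; exists o.
Qed.

Lemma ffree_rename s p k : ffree k (frename s p) -> exists2 i, ffree i p & s i = k.
Proof.
elim: p s k => [t1 t2|r args||p IHp q IHq|p IHp q IHq|p IHp q IHq|p IHp|p IHp] s k /=.
- by case=> /tfree_rename[i ? <-]; exists i => //; [left|right].
- by case=> o /tfree_rename[i ? <-]; exists i => //; exists o.
- by [].
1-3: by case=> [/IHp|/IHq] [i ? <-]; exists i => //; [left|right].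
1-2: by case/IHp => -[|i] //= ? [<-]; exists i.
Qed.

Definition exs k p := iter k (@fex L) p.
Definition alls k p := iter k (@fall L) p.

Lemma ffree_alls k p i : ffree i (alls k p) <-> ffree (i + k) p.
Proof. by elim: k i => [|k IH] i /=; rewrite ?addn0 // IH addSnnS. Qed.

End Syntax.

Section Prepend.
Variable T : Type.
Implicit Types (g e : nat -> T).

(* The environment [g 0, ..., g (k-1), e 0, e 1, ...] seen under a block of k quantifiers. *)
Definition prepend k g e i := if i < k then g i else e (i - k).

Lemma prepend_lt k g e i : i < k -> prepend k g e i = g i.
Proof. by rewrite /prepend => ->. Qed.

Lemma prepend_add k g e i : prepend k g e (k + i) = e i.
Proof. by rewrite /prepend ltnNge leq_addr addKn. Qed.

Lemma prepend0 g e : prepend 0 g e = e.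
Proof. by apply: funext => i; rewrite /prepend subn0. Qed.

Lemma prepend_S k g e : prepend k.+1 g e = prepend k g (scons (g k) e).
Proof.
apply: funext => i; rewrite /prepend; case: (ltngtP i k) => [ik|ki|->].
- by rewrite ltnS ltnW.
- rewrite ltnNge ki /= subnS.
  by rewrite -subn_gt0 in ki; case: (i - k) ki.
by rewrite leqnn subnn.
Qed.

Lemma prepend_ext k g g' e : (forall i, i < k -> g i = g' i) -> prepend k g e = prepend k g' e.
Proof. by move=> gg'; apply: funext => i; rewrite /prepend; case: ifP => // /gg'. Qed.

End Prepend.

Section Blocks.
Variable L : language.
Implicit Types (M : structure L) (p : form L).

Lemma sat_exs M k p (e : nat -> M) : sat e (exs k p) <-> exists g, sat (prepend k g e) p.
Proof.
elim: k e => [|k IH] e /=; first by split=> [pe|[g]]; [exists e|]; rewrite prepend0.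
split=> [[x /IH[g pg]]|[g]]; last by rewrite prepend_S => pg; exists (g k); apply/IH; exists g.
exists (fun i => if i < k then g i else x); rewrite prepend_S ltnn.
by rewrite (@prepend_ext _ _ _ g) // => i /= ->.
Qed.

Lemma sat_alls M k p (e : nat -> M) : sat e (alls k p) <-> forall g, sat (prepend k g e) p.
Proof.
elim: k e => [|k IH] e /=; first by split=> [pe g|/(_ e)]; rewrite prepend0.
split=> [pg g|pg x]; first by rewrite prepend_S; move/IH: (pg (g k)).
apply/IH => g; move: (pg (fun i => if i < k then g i else x)).
by rewrite prepend_S ltnn (@prepend_ext _ _ _ g) // => i /= ->.
Qed.

End Blocks.

Section Theories.
Variable L : language.
Implicit Types (M X N : structure L) (p : form L).

Definition supfv p := \max_(i <- fv p) i.+1.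

(* Lets us use concrete formulas as axioms without proving them to be sentences. *)
Definition closure p := alls (supfv p) p.

Lemma ffree_supfv p i : ffree i p -> i < supfv p.
Proof. by move/ffreeE => ip; apply: (leq_bigmax_seq i). Qed.

Lemma closure_sentence p : sentence (closure p).
Proof. by move=> i /ffree_alls/ffree_supfv; rewrite ltnNge leq_addl. Qed.

Lemma sat_closure M p : (forall e : nat -> M, sat e (closure p)) <-> (forall e : nat -> M, sat e p).
Proof.
split=> pe e; last by apply/sat_alls.
move/sat_alls: (pe e) => /(_ e).
by rewrite (sat_ext (e' := e)) // => i /ffree_supfv; apply: prepend_lt.
Qed.

Definition Th X : theory L := fun p => sentence p /\ forall e : nat -> X, sat e p.

Lemma Th_complete X : complete (Th X).
Proof.
split; [by move=> p [] | by exists X => p [] |].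
move=> p sp; have [pX|npX] := EM (forall e : nat -> X, sat e p).
  by left=> N NX; apply: NX.
right=> N NX; apply: NX; split=> [i [/sp|] //|e pe].
by apply: npX => e'; apply/(sentence_sat e' e sp).
Qed.

Lemma models_Th_valid N X p :
  models N (Th X) -> (forall e : nat -> X, sat e p) -> forall e : nat -> N, sat e p.
Proof.
move=> NX pX; apply/sat_closure; apply: NX; split; first exact: closure_sentence.
exact/sat_closure.
Qed.

End Theories.

Section Reducts.
Variables L E : language.

Definition reduct (N : structure (Lsum L E)) : structure L :=
  Structure (dom_inh N) (fun f => @fint _ N (inl f)) (fun r => @rint _ N (inl r)).

Definition expand (N : structure L) (fE : forall g : func E, ('I_(farity g) -> N) -> N)
    (rE : forall r : rel E, ('I_(rarity r) -> N) -> Prop) : structure (Lsum L E) :=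
  Structure (dom_inh N)
   (fun s => match s as s0 return ('I_(@farity (Lsum L E) s0) -> N) -> N with
             | inl f => @fint _ N f | inr g => fE g end)
   (fun s => match s as s0 return ('I_(@rarity (Lsum L E) s0) -> N) -> Prop with
             | inl r => @rint _ N r | inr r => rE r end).

Lemma teval_reduct (N : structure (Lsum L E)) (e : nat -> N) t :
  teval e (ttr E t) = teval (M := reduct N) e t.
Proof. by elim: t => //= f args IH; congr fint; apply: funext => k. Qed.

Lemma sat_reduct (N : structure (Lsum L E)) (e : nat -> N) p :
  sat e (ftr E p) <-> sat (M := reduct N) e p.
Proof.
elim: p e => [t1 t2|r args||p IHp q IHq|p IHp q IHq|p IHp q IHq|p IHp|p IHp] e /=.
- by rewrite !teval_reduct.
- suff -> : (fun k => teval e (ttr E (args k))) = (fun k => teval (M := reduct N) e (args k)) by [].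
  by apply: funext => k; rewrite teval_reduct.
- by [].
1-3: by rewrite IHp IHq.
- by split=> px x; apply/IHp.
- by split=> -[x px]; exists x; apply/IHp.
Qed.

(* [reduct (expand N fE rE)] is [N] up to eta, which [case: N] exposes. *)
Lemma sat_expand (N : structure L) fE rE (e : nat -> N) p :
  sat (M := expand fE rE) e (ftr E p) <-> sat e p.
Proof. by case: N fE rE e => *; apply: sat_reduct. Qed.

Lemma expansion_Th (T : theory L) (X : structure (Lsum L E)) :
  (forall p, T p -> forall e : nat -> X, sat e (ftr E p)) -> expansion T (Th X).
Proof.
by move=> TX; split=> [|p Tp N NX]; [apply: Th_complete | apply: models_Th_valid NX (TX p Tp)].
Qed.

Lemma reduct_models (T : theory L) T' (N : structure (Lsum L E)) :
  expansion T T' -> models N T' -> models (reduct N) T.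
Proof. by case=> _ T'T NT' p Tp e; apply/sat_reduct; apply: T'T. Qed.

End Reducts.

Section BigConnectives.
Variable L : language.
Implicit Types (M : structure L).

Definition conjs (l : seq (form L)) := foldr (@fand L) (fnot ffalse) l.
Definition disjs (l : seq (form L)) := foldr (@f_or L) ffalse l.

Lemma sat_conjs (T : eqType) (s : seq T) f M (e : nat -> M) :
  sat e (conjs (map f s)) <-> forall x, x \in s -> sat e (f x).
Proof.
elim: s => [|a s IH] /=; first by [].
rewrite IH; split=> [[fa fs] x|fs]; last by split=> [|x xs]; apply: fs; rewrite inE ?eqxx ?xs ?orbT.
by rewrite inE => /predU1P[->|/fs].
Qed.

Lemma sat_disjs (T : eqType) (s : seq T) f M (e : nat -> M) :
  sat e (disjs (map f s)) <-> exists2 x, x \in s & sat e (f x).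
Proof.
elim: s => [|a s IH] /=; first by split=> // -[].
rewrite IH; split=> [[fa|[x xs fx]]|[x]]; first by exists a; rewrite ?inE ?eqxx.
  by exists x; rewrite // inE xs orbT.
by rewrite inE => /predU1P[-> ?|xs fx]; [left | right; exists x].
Qed.

Lemma ffree_disjs (T : eqType) (s : seq T) f i :
  ffree i (disjs (map f s)) -> exists2 x, x \in s & ffree i (f x).
Proof.
elim: s => [|a s IH] //= [fa|/IH[x xs fx]]; first by exists a; rewrite ?inE ?eqxx.
by exists x; rewrite // inE xs orbT.
Qed.

End BigConnectives.

(** * Structures with at most n elements *)

Definition offdiag (s : seq nat) := [seq ij <- [seq (i, j) | i <- s, j <- s] | ij.1 != ij.2].

Lemma mem_offdiag s i j : ((i, j) \in offdiag s) = [&& i \in s, j \in s & i != j].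
Proof.
rewrite mem_filter /= andbC; case: (i != j); rewrite ?andbF ?andbT //=.
by apply/allpairsP/andP => [[[x y] [? ? [-> ->]]]|[? ?]] //; exists (i, j).
Qed.

Definition at_most n (T : Type) := forall g : nat -> T, ~ {in gtn n.+1 &, injective g}.

Lemma at_mostS n T : at_most n T -> at_most n.+1 T.
Proof. by move=> Tn g ginj; apply: (Tn g) => a b ? ? /ginj; apply; apply: ltnW. Qed.

Lemma finite_at_most T : ~ infinite_type T -> exists n, at_most n T.
Proof.
move/existsNP=> [s /forallNP s_enum]; exists (size s) => g ginj.
have idx x : {k : 'I_(size s) | nth x s k = x}.
  apply: cid; have /existsNP[k /not_implyP[ks /contrapT kx]] := s_enum x.
  by exists (Ordinal ks).
pose h (a : 'I_(size s).+1) := sval (idx (g a)).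
suff /leq_card : injective h by rewrite !card_ord ltnn.
move=> a b hab; apply/val_inj/ginj; [exact: ltn_ord..|].
by rewrite -(svalP (idx (g a))) -(svalP (idx (g b))) -/(h a) hab (set_nth_default (g b)).
Qed.

Lemma at_most_collision n T (g : nat -> T) :
  at_most n T -> exists a b, [/\ a < b, b <= n & g a = g b].
Proof.
move=> Tn; apply: contrapT => nab; apply: (Tn g) => a b ak bk gab.
by case: (ltngtP a b) => // [ab|ba]; case: nab; [exists a, b | exists b, a].
Qed.

Section Cardinality.
Variable L : language.
Implicit Types (M : structure L).

Definition distinct k : form L :=
  conjs [seq fnot (feq (var ij.1) (var ij.2)) | ij <- offdiag (iota 0 k)].

Definition atleast k := exs k (distinct k).

Lemma sat_distinct M (e : nat -> M) k : sat e (distinct k) <-> {in gtn k &, injective e}.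
Proof.
rewrite sat_conjs; split=> [ne a b ak bk eab|einj [a b]].
  have [//|ab] := eqVneq a b.
  by case: (ne (a, b) _ eab); rewrite mem_offdiag !mem_iota add0n (ak : a < k) (bk : b < k) ab.
by rewrite mem_offdiag !mem_iota add0n => /and3P[/= ak bk /eqP ab] /= eab; apply/ab/einj.
Qed.

Lemma sat_atleast M (e : nat -> M) k :
  sat e (atleast k) <-> exists g : nat -> M, {in gtn k &, injective g}.
Proof.
rewrite sat_exs; split=> -[g gk]; exists g.
  by move=> a b ak bk; move/sat_distinct: gk => /(_ a b ak bk); rewrite !prepend_lt.
by apply/sat_distinct => a b ak bk; rewrite !prepend_lt //; apply: gk.
Qed.

Lemma at_mostE M n : at_most n M <-> forall e : nat -> M, ~ sat e (atleast n.+1).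
Proof.
split=> [Mn e /sat_atleast[g /Mn] // | Mn g ginj].
by apply: (Mn g); apply/sat_atleast; exists g.
Qed.

End Cardinality.

Section Nary.
Variables (L : language) (U : theory L) (n : nat).
Implicit Types (p q : form L).

Definition fvs p := undup (fv p).

Lemma mem_fvs p i : ffree i p <-> i \in fvs p.
Proof. by rewrite mem_undup ffreeE. Qed.

Definition nbasic_equiv p := exists q,
  [/\ boolcomb (nbasic n) q, forall i, ffree i q -> ffree i p & consequence U (fiff p q)].

Lemma nbasic_equiv_few p : size (fvs p) <= n -> nbasic_equiv p.
Proof.
move=> pn; exists p; split=> // [|N _ e]; last by split.
by apply/bc_base; left; exists (fvs p); split=> // i /mem_fvs.
Qed.

Lemma nbasic_equiv_eq i j : nbasic_equiv (feq (var i) (var j)).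
Proof.
by exists (feq (var i) (var j)); split=> // [|N _ e]; [apply/bc_base; right; exists i, j | split].
Qed.

Lemma nbasic_equiv_false : nbasic_equiv ffalse.
Proof. by exists ffalse; split=> // [|N _ e]; [apply: bc_false | split]. Qed.

Lemma nbasic_equiv_and p p' : nbasic_equiv p -> nbasic_equiv p' -> nbasic_equiv (fand p p').
Proof.
move=> [q [bq qp pq]] [q' [bq' qp' pq']]; exists (fand q q'); split.
- exact: bc_and.
- by move=> i [/qp|/qp'] /=; tauto.
- by move=> N NU e; move: (pq N NU e) (pq' N NU e) => /=; tauto.
Qed.

Lemma nbasic_equiv_or p p' : nbasic_equiv p -> nbasic_equiv p' -> nbasic_equiv (f_or p p').
Proof.
move=> [q [bq qp pq]] [q' [bq' qp' pq']]; exists (f_or q q'); split.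
- exact: bc_or.
- by move=> i [/qp|/qp'] /=; tauto.
- by move=> N NU e; move: (pq N NU e) (pq' N NU e) => /=; tauto.
Qed.

Lemma nbasic_equiv_disjs (T : eqType) (s : seq T) f :
  (forall x, x \in s -> nbasic_equiv (f x)) -> nbasic_equiv (disjs (map f s)).
Proof.
elim: s => [|a s IH] fs /=; first exact: nbasic_equiv_false.
apply: nbasic_equiv_or; first by apply: fs; rewrite inE eqxx.
by apply: IH => x xs; apply: fs; rewrite inE xs orbT.
Qed.

Lemma nbasic_equiv_trans p p' :
  consequence U (fiff p p') -> (forall i, ffree i p' -> ffree i p) ->
  nbasic_equiv p' -> nbasic_equiv p.
Proof.
move=> pp' p'p [q [bq qp' p'q]]; exists q; split=> // [i /qp'/p'p //|N NU e].
by move: (pp' N NU e) (p'q N NU e) => /=; tauto.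
Qed.

Definition subst_var (j i k : nat) := if k == j then i else k.

Definition collapse p := disjs
  [seq fand (feq (var ij.1) (var ij.2)) (frename (subst_var ij.2 ij.1) p) | ij <- offdiag (fvs p)].

Lemma ffree_collapse p k : ffree k (collapse p) -> ffree k p.
Proof.
case/ffree_disjs => -[i j]; rewrite mem_offdiag => /and3P[/mem_fvs ip /mem_fvs jp _] /=.
by case=> [[->|->] //|/ffree_rename[k' k'p]]; rewrite /subst_var; case: eqP => _ <-.
Qed.

Lemma size_fvs_subst_var p i j :
  (i, j) \in offdiag (fvs p) -> size (fvs (frename (subst_var j i) p)) < size (fvs p).
Proof.
rewrite mem_offdiag => /and3P[ip jp ij].
have sub : {subset fvs (frename (subst_var j i) p) <= rem j (fvs p)}.
  move=> k /mem_fvs/ffree_rename[k' /mem_fvs k'p <-].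
  rewrite mem_rem_uniq ?undup_uniq // inE /subst_var.
  by case: (k' =P j) => [_|/eqP ->]; rewrite ?ij.
have := uniq_leq_size (undup_uniq _) sub; rewrite size_rem //.
have : 0 < size (fvs p) by case: (fvs p) jp.
by case: (size (fvs p)) => // m _; rewrite ltnS.
Qed.

Section Bounded.
Hypothesis U_at_most : forall N, models N U -> at_most n N.

Lemma sat_collapse p : n < size (fvs p) -> consequence U (fiff p (collapse p)).
Proof.
move=> many N NU e.
have sat_subst i j : e i = e j -> sat e (frename (subst_var j i) p) <-> sat e p.
  move=> eij; rewrite sat_rename; suff -> : e \o subst_var j i = e by [].
  by apply: funext => k /=; rewrite /subst_var; case: eqP => // ->.
split=> [pe|/sat_disjs[[i j] _ /= [eij]]]; last by rewrite sat_subst.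
have [a [b [ab bn eab]]] := at_most_collision (fun a => e (nth 0 (fvs p) a)) (U_at_most NU).
have bF : b < size (fvs p) := leq_ltn_trans bn many.
have aF : a < size (fvs p) := ltn_trans ab bF.
apply/sat_disjs; exists (nth 0 (fvs p) a, nth 0 (fvs p) b); last by split=> //; rewrite sat_subst.
by rewrite mem_offdiag !mem_nth // nth_uniq ?undup_uniq // neq_ltn ab.
Qed.

Lemma bounded_nary : nary n U.
Proof.
move=> p; elim: (size (fvs p)).+1 {-2}p (ltnSn (size (fvs p))) => // m IH {}p pm.
have [few|many] := leqP (size (fvs p)) n; first exact: nbasic_equiv_few.
apply: (nbasic_equiv_trans (sat_collapse many) (@ffree_collapse p)).
apply: nbasic_equiv_disjs => -[i j] ij; apply: nbasic_equiv_and; first exact: nbasic_equiv_eq.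
by apply: IH; apply: leq_trans (size_fvs_subst_var ij) _.
Qed.

End Bounded.
End Nary.

Section BoolcombAtoms.
Variable L : language.

Lemma boolcomb_atoms (P : form L -> Prop) q : boolcomb P q ->
  exists atoms : seq (form L),
    (forall a, List.In a atoms -> P a /\ forall i, ffree i a -> ffree i q) /\
    forall (M : structure L) (e e' : nat -> M),
      (forall a, List.In a atoms -> sat e a <-> sat e' a) -> (sat e q <-> sat e' q).
Proof.
elim=> [r Pr||r s _ [l [lr dr]] _ [l' [ls ds]]|r s _ [l [lr dr]] _ [l' [ls ds]]
       |r s _ [l [lr dr]] _ [l' [ls ds]]].
- by exists [:: r]; split=> [a [<-|] //|M e e' /(_ r (or_introl erefl))].
- by exists [::].
all: exists (l ++ l'); split=> [a /List.in_app_iff[/lr|/ls] [Pa aq]|M e e' ee'].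
all: try by split=> // i /aq /=; tauto.
all: rewrite /=.
all: have /dr-> : forall a, List.In a l -> sat e a <-> sat e' a
       by move=> a al; apply: ee'; apply/List.in_app_iff; left.
all: have /ds-> // : forall a, List.In a l' -> sat e a <-> sat e' a
       by move=> a al; apply: ee'; apply/List.in_app_iff; right.
Qed.

End BoolcombAtoms.

(** * Counting traces on a grid *)

Definition tup (T : Type) n (z : nat -> T) (y : T) (k : 'I_n.+1) : T := if k < n then z k else y.
Arguments tup {T} n z y k.

Definition many_outside (T : Type) (Q P : T -> Prop) := forall k, exists a : nat -> T,
  {in gtn k &, injective a} /\ forall i, i < k -> Q (a i) /\ ~ P (a i).

Definition flip_closed (T : Type) n (Q P : T -> Prop) (R : ('I_n.+1 -> T) -> Prop) :=
  forall x : nat -> T, (forall i, i < n -> Q (x i)) -> forall y, P y -> exists2 y', P y' &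
    forall z, R (tup n z y') <-> ~ (R (tup n z y) <-> forall i, i < n -> z i = x i).
Arguments flip_closed {T} n Q P R.

Lemma addb_asboolP (A B : Prop) (b : bool) : reflect B b -> reflect (~ (A <-> B)) (`[< A >] (+) b).
Proof. by move=> bB; case: asboolP => A_; case: bB => B_; constructor; tauto. Qed.

Lemma addb_not_iff (a b : bool) : a (+) b <-> ~ (a <-> b).
Proof.
by case: a; case: b => /=; split=> // h; [case: h | case=> /(_ isT) | case=> _ /(_ isT) | case: h].
Qed.

Lemma map_eq_In (A B : Type) (f g : A -> B) (s : seq A) :
  map f s = map g s -> forall x, List.In x s -> f x = g x.
Proof. by elim: s => //= y s IH [fg /IH fgs] x [<-|/fgs]. Qed.

Section Counting.
Variables (L : language) (N : structure L) (n' : nat).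
Local Notation n := n'.+1.
Variables (Q P : N -> Prop) (R : ('I_n.+1 -> N) -> Prop).
Hypotheses (QP : many_outside Q P) (P0 : exists y, P y) (Rflip : flip_closed n Q P R).

Section Grid.
Variables (k' : nat) (a : nat -> N).
Local Notation k := k'.+1.
Hypotheses (a_inj : {in gtn k &, injective a}) (aQ : forall i, i < k -> Q (a i) /\ ~ P (a i)).
Implicit Types psi : form L.

Definition env (t : {ffun 'I_n -> 'I_k}) (b : N) (i : nat) : N :=
  if i < n then a (t (inord i)) else b.

Definition trace b : {ffun {ffun 'I_n -> 'I_k} -> bool} :=
  [ffun t => `[< R (fun j => env t b j) >]].

Lemma trace_flip t0 b : P b -> exists2 b', P b' & trace b' = [ffun t => trace b t (+) (t == t0)].
Proof.
move=> Pb; have [|b' Pb' flip_b] := Rflip (x := fun i => a (t0 (inord i))) _ Pb.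
  by move=> i _; case: (aQ (ltn_ord (t0 (inord i)))).
exists b' => //; apply/ffunP => t; rewrite !ffunE.
apply: (asbool_equiv_eqP (addb_asboolP _ _) (flip_b (fun i => a (t (inord i))))).
apply: (iffP eqP) => [-> // | tt0]; apply/ffunP => i.
apply/val_inj; apply: a_inj; [exact: ltn_ord.. | by have := tt0 i (ltn_ord i); rewrite inord_val].
Qed.

Lemma trace_surj S : exists b, P b /\ trace b = S.
Proof.
have [b0 Pb0] := P0.
suff toggle D : uniq D -> exists2 b, P b & trace b = [ffun t => trace b0 t (+) (t \in D)].
  have [b Pb trb] := toggle _ (enum_uniq [pred t | S t != trace b0 t]).
  exists b; split=> //; apply/ffunP => t.
  by rewrite trb ffunE mem_enum inE; case: (S t); case: (trace b0 t).
elim: D => [_|t0 D IH /andP[t0D /IH[b Pb trb]]].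
  by exists b0 => //; apply/ffunP => t; rewrite [RHS]ffunE in_nil addbF.
have [b' Pb' trb'] := trace_flip t0 Pb; exists b' => //; apply/ffunP => t.
rewrite trb' trb !ffunE inE -addbA; congr addb.
by case: (t =P t0) => [->|]; rewrite ?(negbTE t0D) ?addbF.
Qed.

Definition hole (psi : form L) : 'I_n := odflt ord0 [pick c : 'I_n | ~~ `[< ffree c psi >]].

Lemma hole_not_free psi : (exists c : 'I_n, ~ ffree c psi) -> ~ ffree (hole psi) psi.
Proof.
case=> c cpsi; rewrite /hole; case: pickP => [c' /asboolPn //|/(_ c) /=].
by move/negbFE/asboolP.
Qed.

Definition ext (c : 'I_n) (u : {ffun 'I_n' -> 'I_k}) : {ffun 'I_n -> 'I_k} :=
  [ffun i => odflt ord0 (omap u (unlift c i))].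

Definition proj (c : 'I_n) (t : {ffun 'I_n -> 'I_k}) : {ffun 'I_n' -> 'I_k} :=
  [ffun i => t (lift c i)].

Lemma ext_proj c t i : i != c -> ext c (proj c t) i = t i.
Proof.
move=> ic; rewrite ffunE; case: unliftP => [j -> /=|ci]; first by rewrite ffunE.
by rewrite ci eqxx in ic.
Qed.

Lemma sat_env_hole psi t b : ~ ffree (hole psi) psi -> (forall i, ffree i psi -> i <= n) ->
  sat (env t b) psi <-> sat (env (ext (hole psi) (proj (hole psi) t)) b) psi.
Proof.
move=> hpsi psin; apply: sat_ext => i ipsi; rewrite /env; case: ifP => // ilt.
rewrite ext_proj //; apply: contraPneq hpsi => ih.
by rewrite -ih inordK.
Qed.

Definition data_atom psi b : {ffun {ffun 'I_n' -> 'I_k} -> bool} :=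
  [ffun u => `[< sat (env (ext (hole psi) u) b) psi >]].

Lemma env_neq t b i : P b -> i < n -> env t b i <> env t b n.
Proof. by rewrite /env ltnn => Pb -> ab; case: (aQ (ltn_ord (t (inord i)))); rewrite ab. Qed.

Lemma nbasic_all_free psi : nbasic n psi -> (forall i, i <= n -> ffree i psi) ->
  exists i j, psi = feq (var i) (var j).
Proof.
case=> // -[s [sn psis]] psi_free; exfalso.
have : size (iota 0 n.+1) <= size s.
  by apply: uniq_leq_size (iota_uniq _ _) _ => i; rewrite mem_iota => /psi_free/psis.
by rewrite size_iota ltnNge sn.
Qed.

Lemma atom_determined psi b b' : nbasic n psi -> (forall i, ffree i psi -> i <= n) ->
  P b -> P b' -> data_atom psi b = data_atom psi b' ->
  forall t, sat (env t b) psi <-> sat (env t b') psi.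
Proof.
move=> bpsi psin Pb Pb' dbb' t.
have [[c cpsi]|all_free] := EM (exists c : 'I_n, ~ ffree c psi).
  have hpsi := hole_not_free (ex_intro _ c cpsi).
  rewrite !(sat_env_hole t _ hpsi psin); apply: asbool_eq_equiv.
  by move/ffunP: dbb' => /(_ (proj (hole psi) t)); rewrite !ffunE.
have free_below i : i < n -> ffree i psi.
  by move=> ilt; apply: contrapT => ipsi; apply: all_free; exists (Ordinal ilt).
have [nfree|nnfree] := EM (ffree n psi); last first.
  apply: sat_ext => i ipsi; rewrite /env; case: ltnP => // ni.
  suff ein : i = n by rewrite ein in ipsi.
  by apply/eqP; rewrite eqn_leq psin.
have [i [j psi_ij]] : exists i j, psi = feq (var i) (var j).
  by apply: nbasic_all_free bpsi _ => i; rewrite leq_eqVlt => /predU1P[-> //|/free_below].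
move: (free_below 0 (ltn0Sn _)) nfree; rewrite {}psi_ij /=.
have ne bb : P bb -> 0 = i \/ 0 = j -> n = i \/ n = j -> env t bb i <> env t bb j.
  move=> Pbb [<-|<-] [ni|nj]; rewrite -?ni -?nj //.
  - by apply: env_neq.
  - by move/esym; apply: env_neq.
by move=> zij nij; split=> [/(ne b Pb zij nij)|/(ne b' Pb' zij nij)].
Qed.

End Grid.

Lemma rel_not_nbasic q : boolcomb (nbasic n) q -> (forall i, ffree i q -> i <= n) ->
  ~ (forall e : nat -> N, R (fun j => e j) <-> sat e q).
Proof.
move=> bq qn Rq; have [l [l_atoms l_det]] := boolcomb_atoms bq.
have [a [a_inj aQ]] := QP (size l).+1.
pose data b := map_tuple (fun psi => data_atom (size l) a psi b) (in_tuple l).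
have trace_data b b' : P b -> P b' -> data b = data b' -> trace (size l) a b = trace (size l) a b'.
  move=> Pb Pb' /(congr1 val) /= /map_eq_In dbb'; apply/ffunP => t; rewrite !ffunE.
  apply: asbool_equiv_eq; rewrite !Rq; apply: l_det => psi lpsi.
  have [bpsi psiq] := l_atoms psi lpsi.
  by apply: (atom_determined aQ bpsi _ Pb Pb' (dbb' psi lpsi)) => i /psiq/qn.
pose bS S := sval (cid (trace_surj a_inj aQ S)).
have bSP S : P (bS S) /\ trace (size l) a (bS S) = S := svalP (cid (trace_surj a_inj aQ S)).
have /leq_card : injective (fun S => data (bS S)).
  move=> S S' dSS'; case: (bSP S) (bSP S') => [PS <-] [PS' <-]; exact: trace_data dSS'.
rewrite card_tuple !card_ffun !card_ord card_bool -expnM leq_exp2l // expnS.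
by rewrite mulnC leq_pmul2l ?expn_gt0 // ltnn.
Qed.

End Counting.

(** * The flip expansion *)

Inductive flip_sym := SymP | SymQ | SymR of nat.

Definition Lflip : language := {| func := void; rel := flip_sym;
  farity := fun v => match v with end;
  rarity := fun r => if r is SymR n then n.+1 else 1 |}.

Section FlipAxioms.
Variable L : language.
Local Notation L1 := (Lsum L Lflip).
Implicit Types (N : structure L1).

Definition Pf v : form L1 := @frel L1 (inr SymP) (fun _ => var v).
Definition Qf v : form L1 := @frel L1 (inr SymQ) (fun _ => var v).
Definition Rf n (h : nat -> nat) : form L1 := @frel L1 (inr (SymR n)) (fun k => var (h k)).

Definition Pof N (x : N) : Prop := @rint _ N (inr SymP) (fun _ => x).
Definition Qof N (x : N) : Prop := @rint _ N (inr SymQ) (fun _ => x).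
Definition Rof N n (z : 'I_n.+1 -> N) : Prop := @rint _ N (inr (SymR n)) z.

Definition axQ k : form L1 :=
  exs k (fand (distinct L1 k) (conjs [seq fand (Qf i) (fnot (Pf i)) | i <- iota 0 k])).

Definition axP : form L1 := fex (Pf 0).

(* In the body, variable i < n is z_i, n is y', n+1 is y and n+2+i is x_i. *)
Definition flip_body n : form L1 :=
  fiff (Rf n id) (fnot (fiff (Rf n (fun k => if k < n then k else n.+1))
                             (conjs [seq feq (var i) (var (n.+2 + i)) | i <- iota 0 n]))).

Definition axflip n : form L1 :=
  alls n (fimp (conjs [seq Qf i | i <- iota 0 n])
    (fall (fimp (Pf 0) (fex (fand (Pf 0) (alls n (flip_body n))))))).

Lemma sat_axQ N (e : nat -> N) k : sat e (axQ k) <->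
  exists a : nat -> N, {in gtn k &, injective a} /\ forall i, i < k -> Qof (a i) /\ ~ Pof (a i).
Proof.
rewrite sat_exs; split=> -[g [ginj gQ]]; exists g; split.
- by move=> a b ak bk; move/sat_distinct: ginj => /(_ a b ak bk); rewrite !prepend_lt.
- by move=> i ik; move/sat_conjs: gQ => /(_ i); rewrite mem_iota /= prepend_lt //; apply.
- by apply/sat_distinct => a b ak bk; rewrite !prepend_lt //; apply: ginj.
- by apply/sat_conjs => i; rewrite mem_iota /= => ik; rewrite prepend_lt //; apply: gQ.
Qed.

Lemma sat_Rf N (e : nat -> N) n (h : nat -> nat) (z : 'I_n.+1 -> N) :
  (forall k : 'I_n.+1, e (h k) = z k) -> sat e (Rf n h) <-> Rof z.
Proof. by move=> ez; rewrite /= (funext ez). Qed.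

Lemma sat_flip_body N n (x : nat -> N) e y y' :
  sat (scons y' (scons y (prepend n x e))) (alls n (flip_body n)) <->
  forall z, Rof (tup n z y') <-> ~ (Rof (tup n z y) <-> forall i, i < n -> z i = x i).
Proof.
rewrite sat_alls.
suff body z : sat (prepend n z (scons y' (scons y (prepend n x e)))) (flip_body n) <->
    (Rof (tup n z y') <-> ~ (Rof (tup n z y) <-> forall i, i < n -> z i = x i)).
  by split=> H z; apply/body.
set env := prepend n z _.
have env_y' (k : 'I_n.+1) : env (id k) = tup n z y' k.
  rewrite /tup /env; case: ifP => [kn|nk]; first exact: prepend_lt.
  suff -> : val k = n + 0 by rewrite prepend_add.
  by apply/eqP; rewrite addn0 eqn_leq -ltnS ltn_ord leqNgt nk.
have env_y (k : 'I_n.+1) : env (if k < n then val k else n.+1) = tup n z y k.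
  by rewrite /tup /env; case: ifP => [kn|_]; [apply: prepend_lt | rewrite -addn1 prepend_add].
have env_x i : i < n -> env (n.+2 + i) = x i.
  by move=> ilt; rewrite /env !addSnnS prepend_add /= prepend_lt.
have env_conj : (forall i, i \in iota 0 n -> sat env (feq (var i) (var (n.+2 + i)))) <->
                (forall i, i < n -> z i = x i).
  split=> zx i; rewrite ?mem_iota ?add0n /= => ilt; move: (zx i);
    by rewrite ?mem_iota ?add0n /= env_x // {1}/env prepend_lt //; apply.
by rewrite /flip_body sat_fiff sat_fnot sat_fiff (sat_Rf env_y') (sat_Rf env_y) sat_conjs env_conj.
Qed.

Lemma sat_axflip N (e : nat -> N) n :
  sat e (axflip n) <-> flip_closed n (@Qof N) (@Pof N) (@Rof N n).
Proof.
have conjQ x :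
    sat (prepend n x e) (conjs [seq Qf i | i <- iota 0 n]) <-> forall i, i < n -> Qof (x i).
  rewrite sat_conjs; split=> xQ i; rewrite ?mem_iota ?add0n /= => ilt; move: (xQ i);
    by rewrite ?mem_iota ?add0n /= prepend_lt //; apply.
rewrite sat_alls; split=> flip x.
  move=> xQ y Py; have [y' [Py' body]] := flip x ((conjQ x).2 xQ) y Py.
  by exists y'; [exact: Py' | exact: (sat_flip_body _ _ _ _ _).1 body].
move=> /conjQ xQ y Py; have [y' Py' body] := flip x xQ y Py.
by exists y'; split=> //; apply/sat_flip_body.
Qed.

End FlipAxioms.

Section InfiniteEmbedding.
Variables (T : Type) (Tinf : infinite_type T).

Definition fresh (s : seq T) : T := sval (cid (Tinf s)).

Lemma fresh_notin s k : k < size s -> nth (fresh s) s k <> fresh s.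
Proof. exact: svalP (cid (Tinf s)) k. Qed.

Fixpoint fresh_seq n : seq T :=
  if n is m.+1 then rcons (fresh_seq m) (fresh (fresh_seq m)) else [::].

Lemma size_fresh_seq n : size (fresh_seq n) = n.
Proof. by elim: n => //= n IH; rewrite size_rcons IH. Qed.

Lemma nth_fresh_seq n i x : i < n -> nth x (fresh_seq n) i = fresh (fresh_seq i).
Proof.
elim: n => // n IH; rewrite ltnS leq_eqVlt => /predU1P[->|ilt] /=;
  by rewrite nth_rcons size_fresh_seq ?ltnn ?eqxx // ilt IH.
Qed.

Lemma infinite_emb : exists emb : nat -> T, injective emb.
Proof.
exists (fun i => fresh (fresh_seq i)).
suff lt_neq i j : i < j -> fresh (fresh_seq i) <> fresh (fresh_seq j).
  by move=> i j eij; case: (ltngtP i j) => // [/lt_neq|/lt_neq]; rewrite eij.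
move=> ij; rewrite -(nth_fresh_seq (fresh (fresh_seq j)) ij).
by apply: fresh_notin; rewrite size_fresh_seq.
Qed.

End InfiniteEmbedding.

Definition toggle (T : eqType) (s : T) (D : seq T) :=
  if s \in D then filter (predC1 s) D else s :: D.

Lemma mem_toggle (T : eqType) (s u : T) D : (u \in toggle s D) = (u \in D) (+) (u == s).
Proof.
rewrite /toggle; case: ifP => sD; rewrite ?mem_filter ?inE /=;
  by case: (u =P s) => [->|]; rewrite ?sD ?addbT ?addbF.
Qed.

Section FlipModel.
Variables (L : language) (M : structure L) (emb : nat -> M).
Hypothesis emb_inj : injective emb.

Definition unemb (x : M) : option nat :=
  if pselect (exists i, emb i = x) is left ex then Some (sval (cid ex)) else None.

Lemma unembK i : unemb (emb i) = Some i.
Proof.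
rewrite /unemb; case: pselect => [ex|[]]; last by exists i.
by congr Some; apply: emb_inj; rewrite (svalP (cid ex)).
Qed.

Lemma unemb_Some x i : unemb x = Some i -> x = emb i.
Proof. by rewrite /unemb; case: pselect => // ex [<-]; rewrite (svalP (cid ex)). Qed.

(* Odd points emb (2j+1) code finite sets [decode j] of tuples of even points. *)
Definition code n (z : nat -> M) := [seq unemb (z i) | i <- iota 0 n].

Definition decode j : seq (seq (option nat)) := odflt [::] (unpickle j).

Lemma decode_pickle D : decode (pickle D) = D.
Proof. by rewrite /decode pickleK. Qed.

Definition flip_rint (r : flip_sym) : ('I_(@rarity Lflip r) -> M) -> Prop :=
  match r with
  | SymP => fun z => exists j, z ord0 = emb (2 * j).+1
  | SymQ => fun z => exists i, z ord0 = emb (2 * i)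
  | SymR n => fun z =>
      exists j, z ord_max = emb (2 * j).+1 /\ code n (fun i => z (inord i)) \in decode j
  end.

Definition flip_model : structure (Lsum L Lflip) :=
  @expand L Lflip M (fun g => match g with end) flip_rint.

Lemma flip_model_Q : many_outside (@Qof _ flip_model) (@Pof _ flip_model).
Proof.
move=> k; exists (fun i => emb (2 * i)); split=> [a b _ _ /emb_inj|i _]; first lia.
by split=> [|[j /emb_inj]]; [exists i | lia].
Qed.

Lemma flip_model_P : exists y, @Pof _ flip_model y.
Proof. by exists (emb 1), 0. Qed.

Lemma flip_model_R n z j : @Rof _ flip_model n (tup n z (emb (2 * j).+1)) <-> code n z \in decode j.
Proof.
rewrite /Rof /=; have -> : code n (fun i => tup n z (emb (2 * j).+1) (inord i)) = code n z.
  by apply/eq_in_map => i; rewrite mem_iota add0n /= /tup => ilt; rewrite inordK ?ilt // ltnW.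
rewrite /tup /= ltnn; split=> [[j' [/emb_inj jj']]|zj]; last by exists j.
by have -> : j = j' by lia.
Qed.

Lemma flip_model_flip n :
  flip_closed n (@Qof _ flip_model) (@Pof _ flip_model) (@Rof _ flip_model n).
Proof.
move=> x xQ _ [j ->]; set D := toggle (code n x) (decode j).
exists (emb (2 * pickle D).+1); first by exists (pickle D).
move=> z; rewrite !flip_model_R decode_pickle mem_toggle.
have -> : (forall i, i < n -> z i = x i) <-> code n z == code n x.
  split=> [zx|/eqP/eq_in_map zx i ilt].
    by apply/eqP/eq_in_map => i; rewrite mem_iota add0n /= => ilt; rewrite zx.
  have [m xm] := xQ i ilt; move: (zx i); rewrite mem_iota add0n xm unembK => /(_ ilt).
  exact: unemb_Some.
exact: addb_not_iff.
Qed.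

Lemma flip_expansion_props E (T' : theory (Lsum (Lsum L Lflip) E)) N :
  expansion (Th flip_model) T' -> models N T' ->
  let N1 := reduct N in
  [/\ many_outside (@Qof _ N1) (@Pof _ N1), exists y, @Pof _ N1 y
    & forall n, flip_closed n (@Qof _ N1) (@Pof _ N1) (@Rof _ N1 n)].
Proof.
move=> T'ext NT' N1; have [x0] := dom_inh N.
have transfer p : (forall e : nat -> flip_model, sat e p) -> sat (M := N1) (fun=> x0) p.
  by move=> pX; apply: (models_Th_valid (reduct_models T'ext NT') pX).
split=> [k||n].
- by apply/(@sat_axQ _ N1 (fun=> x0)); apply: transfer => e; apply/sat_axQ; apply: flip_model_Q.
- exact: (transfer (axP L) (fun=> flip_model_P)).
- apply/(@sat_axflip _ N1 (fun=> x0)); apply: transfer => e.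
  by apply/sat_axflip; apply: flip_model_flip.
Qed.

End FlipModel.

(** * The two directions *)

Definition Lempty : language := {| func := void; rel := void;
  farity := fun v => match v with end; rarity := fun v => match v with end |}.

Lemma complete_at_most L (T : theory L) (M : structure L) n :
  complete T -> models M T -> at_most n M -> forall N, models N T -> at_most n N.
Proof.
case=> _ _ Tdec MT Mn N NT; set no_more := fnot (atleast L n.+1).
have Mnm : forall e : nat -> M, sat e no_more by apply/at_mostE.
case: (Tdec _ (@closure_sentence _ no_more)) => [Tnm|Tnnm].
  by apply/at_mostE; apply: (sat_closure N no_more).1 => e; apply: Tnm.
by case: (dom_inh M) => x; case: (Tnnm M MT (fun=> x)); apply: (sat_closure M no_more).2.
Qed.

Lemma bounded_aritizable L (T : theory L) n :
  complete T -> 0 < n -> (forall N, models N T -> at_most n N) -> aritizable T.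
Proof.
case=> _ [N NT] _ n0 Tn; exists n; split=> //; exists Lempty.
pose X := @expand L Lempty N (fun g => match g with end) (fun r => match r with end).
exists (Th X); split.
  by apply: expansion_Th => p Tp e; apply/sat_expand; apply: NT.
apply: bounded_nary => Y YX; apply/at_mostE.
by apply: (models_Th_valid (p := fnot (atleast _ n.+1)) YX); apply/at_mostE/(Tn N NT).
Qed.

Lemma nonaritizable_infinite_model L (T : theory L) E (T' : theory (Lsum L E)) :
  complete T -> expansion T T' -> ~ aritizable T' -> exists M, models M T /\ infinite_type M.
Proof.
move=> T_complete TT' nT'; have [_ [M MT] _] := T_complete; apply: contrapT => no_inf.
have [n Mn] : exists n, at_most n M by apply: finite_at_most => Minf; apply: no_inf; exists M.
apply/nT'/(@bounded_aritizable _ _ n.+1) => //; first exact: TT'.1.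
move=> N NT'; apply: at_mostS.
exact: (complete_at_most T_complete MT Mn (reduct_models TT' NT')).
Qed.

Lemma infinite_model_nonaritizable L (T : theory L) (M : structure L) :
  models M T -> infinite_type M ->
  exists E (T' : theory (Lsum L E)), expansion T T' /\ ~ aritizable T'.
Proof.
move=> MT /infinite_emb[emb emb_inj]; exists Lflip, (Th (flip_model emb)); split.
  by apply: expansion_Th => p Tp e; apply/sat_expand; apply: MT.
case=> n [n0 [E [T' [T'ext nT']]]]; case: n n0 nT' => // n' _ nT'.
have [_ [N NT'] _] := T'ext.1.
have [QP P0 Rflip] := flip_expansion_props emb_inj T'ext NT'.
pose Rn := @frel (Lsum (Lsum L Lflip) E) (inl (inr (SymR n'.+1))) (fun k => var k).
have [q [bq qR Rq]] := nT' Rn.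
apply: (@rel_not_nbasic _ N n' _ _ _ QP P0 (Rflip n'.+1) q bq) => [i /qR[k ->]|e].
  by rewrite -ltnS.
exact: Rq.
Qed.

Theorem proposition3p9 (L : language) (T : theory L) (HT : complete T) :
  (exists (E : language) (T' : theory (Lsum L E)),
      expansion T T' /\ ~ aritizable T')
  <-> (exists M : structure L, models M T /\ infinite_type M).
Proof.
split=> [[E [T' [TT' nT']]]|[M [MT Minf]]].
- exact: nonaritizable_infinite_model HT TT' nT'.
- exact: infinite_model_nonaritizable MT Minf.
Qed.
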